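(* Let $N\ge2$. If $\{|\psi_{ij}\rangle\}_{i,j=1}^N$ is a pair of orthogonal quantum Latin squares of size $N$, then $|\psi\rangle=\frac1N\sum_{i,j=1}^N|i\rangle|j\rangle|\psi_{ij}\rangle$ is an AME(4,$N$) state. Conversely, if $|\psi\rangle\in(\mathbb{C}^N)^{\otimes4}$ is an AME(4,$N$) state, then the vectors $|\psi_{ij}\rangle:=N(\langle i|\otimes\langle j|\otimes\mathbb{I}\otimes\mathbb{I})|\psi\rangle\in\mathbb{C}^N\otimes\mathbb{C}^N$ form a pair of orthogonal quantum Latin squares of size $N$ and $|\psi\rangle=\frac1N\sum_{ij}|i\rangle|j\rangle|\psi_{ij}\rangle$.
   Context: $\{|1\rangle,\dots,|N\rangle\}$ is the computational basis of $\mathbb{C}^N$. A pure state $|\psi\rangle\in(\mathbb{C}^N)^{\otimes4}$ on parties $A,B,C,D$ is absolutely maximally entangled, AME(4,$N$), if its reduced density matrix on every pair of parties equals $\mathbb{I}_{N^2}/N^2$. An $N\times N$ array $\{|\psi_{ij}\rangle\}$ of vectors in $\mathbb{C}^N\otimes\mathbb{C}^N$ is a pair of orthogonal quantum Latin squares (OQLS) of size $N$ if: (1) $\{|\psi_{ij}\rangle\}_{i,j}$ is an orthonormal basis of $\mathbb{C}^N\otimes\mathbb{C}^N$; (2) for each of the two tensor factors $X$ and all $j,k$: $\mathrm{Tr}_X\sum_i|\psi_{ji}\rangle\langle\psi_{ki}|=\delta_{jk}\mathbb{I}_N$; (3) for each of the two tensor factors $X$ and all $j,k$: $\mathrm{Tr}_X\sum_i|\psi_{ij}\rangle\langle\psi_{ik}|=\delta_{jk}\mathbb{I}_N$.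 *)

From mathcomp Require Import all_boot all_algebra.
From mathcomp Require Import reals.
From mathcomp.real_closed Require Import complex.
Set Implicit Arguments. Unset Strict Implicit. Unset Printing Implicit Defensive.
Import GRing.Theory Num.Theory.
Local Open Scope ring_scope.

(* Computational basis |1>,...,|N> of C^N is indexed by 'I_N (= {0,...,N-1}).
   A vector of (C^N)^{(x)4} is a function 'I_N -> 'I_N -> 'I_N -> 'I_N -> C
   (psi a b c d = coefficient of |a>|b>|c>|d>, parties A,B,C,D in order).
   An N x N array {|psi_ij>} of vectors of C^N (x) C^N is a function
   Psi : 'I_N -> 'I_N -> ('I_N -> 'I_N -> C), Psi i j x y = <x|<y|psi_ij>.
   Bra-ket convention: |u><v| has entries u(x) * conj(v(y)). *)

Section Defs.
Variables (R : realType) (N : nat).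
Notation C := R[i].
Notation I := 'I_N.

Definition state4 := I -> I -> I -> I -> C.
Definition vec2 := I -> I -> C.
Definition array2 := I -> I -> vec2.

(* Reduced density matrix on the first two tensor factors (tracing out the
   last two) of |f><f|: rho(x,y; x',y') = sum_{k,l} f x y k l conj(f x' y' k l). *)
Definition rho12 (f : state4) (x y x' y' : I) : C :=
  \sum_(k : I) \sum_(l : I) f x y k l * (f x' y' k l)^*.

Definition rho_AB (psi : state4) := rho12 psi.
Definition rho_AC (psi : state4) := rho12 (fun x y k l => psi x k y l).
Definition rho_AD (psi : state4) := rho12 (fun x y k l => psi x k l y).
Definition rho_BC (psi : state4) := rho12 (fun x y k l => psi k x y l).
Definition rho_BD (psi : state4) := rho12 (fun x y k l => psi k x l y).
Definition rho_CD (psi : state4) := rho12 (fun x y k l => psi k l x y).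

Definition max_mixed2 (x y x' y' : I) : C :=
  ((x == x') && (y == y'))%:R / (N ^ 2)%:R.

Definition is_max_mixed (rho : I -> I -> I -> I -> C) : Prop :=
  forall x y x' y', rho x y x' y' = max_mixed2 x y x' y'.

Definition AME4 (psi : state4) : Prop :=
  is_max_mixed (rho_AB psi) /\ is_max_mixed (rho_AC psi) /\
  is_max_mixed (rho_AD psi) /\ is_max_mixed (rho_BC psi) /\
  is_max_mixed (rho_BD psi) /\ is_max_mixed (rho_CD psi).

Definition inner2 (u v : vec2) : C := \sum_(x : I) \sum_(y : I) (u x y)^* * v x y.

Definition is_onb2 (Psi : array2) : Prop :=
  (forall i j i' j', inner2 (Psi i j) (Psi i' j') = ((i == i') && (j == j'))%:R)
  /\ (forall v : vec2, exists c : I -> I -> C,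
        forall x y, v x y = \sum_(i : I) \sum_(j : I) c i j * Psi i j x y).

(* Tr_1 |u><v| and Tr_2 |u><v| as operators on C^N (matrix entries (b,b')) *)
Definition ptr1 (u v : vec2) (b b' : I) : C := \sum_(a : I) u a b * (v a b')^*.
Definition ptr2 (u v : vec2) (a a' : I) : C := \sum_(b : I) u a b * (v a' b)^*.

Definition OQLS (Psi : array2) : Prop :=
  [/\ is_onb2 Psi,
      (* (2) rows: Tr_X sum_i |psi_ji><psi_ki| = delta_jk I, X = 1, 2 *)
      ((forall j k b b', \sum_(i : I) ptr1 (Psi j i) (Psi k i) b b'
                         = ((j == k) && (b == b'))%:R)
      /\ (forall j k a a', \sum_(i : I) ptr2 (Psi j i) (Psi k i) a a'
                         = ((j == k) && (a == a'))%:R))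
    & (* (3) columns: Tr_X sum_i |psi_ij><psi_ik| = delta_jk I, X = 1, 2 *)
      ((forall j k b b', \sum_(i : I) ptr1 (Psi i j) (Psi i k) b b'
                         = ((j == k) && (b == b'))%:R)
      /\ (forall j k a a', \sum_(i : I) ptr2 (Psi i j) (Psi i k) a a'
                         = ((j == k) && (a == a'))%:R))].

Definition state_of_array (Psi : array2) : state4 :=
  fun a b c d => (N%:R)^-1 *
    \sum_(i : I) \sum_(j : I) ((a == i) && (b == j))%:R * Psi i j c d.

Definition array_of_state (psi : state4) : array2 :=
  fun i j c d => N%:R *
    \sum_(a : I) \sum_(b : I) ((a == i) && (b == j))%:R * psi a b c d.

End Defs.

From mathcomp Require Import all_boot all_algebra.
From mathcomp Require Import reals.
From mathcomp.real_closed Require Import complex.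
From Stdlib Require Import FunctionalExtensionality.
Set Implicit Arguments. Unset Strict Implicit. Unset Printing Implicit Defensive.
Import GRing.Theory Num.Theory.
Local Open Scope ring_scope.

(* The state and the array have the same coefficients up to the factor 1/N,
   so every two-party reduced density matrix of |psi> is N^-2 times a quantity
   read off the array: rho_AB is the Gram matrix of the |psi_ij>, rho_CD is
   sum_ij |psi_ij><psi_ij|, and rho_AC, rho_AD, rho_BC, rho_BD are literally
   the row and column partial-trace sums (2) and (3). An orthonormal family is
   a basis exactly when it satisfies the completeness relation
   sum_ij |psi_ij><psi_ij| = I, so AME(4,N) and OQLS say the same thing. *)

Lemma sum_delta (V : pzSemiRingType) (T : finType) (x : T) (F : T -> V) :
  \sum_(t : T) (x == t)%:R * F t = F x.
Proof.
rewrite (bigD1 x) //= eqxx mul1r big1 ?addr0 // => t.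
by rewrite eq_sym => /negbTE->; rewrite mul0r.
Qed.

Lemma sum_delta2 (V : pzSemiRingType) (S T : finType) (x : S) (y : T)
    (F : S -> T -> V) :
  \sum_(s : S) \sum_(t : T) ((x == s) && (y == t))%:R * F s t = F x y.
Proof.
rewrite -[RHS](sum_delta x (F^~ y)); apply: eq_bigr => s _.
rewrite -(sum_delta y (F s)) mulr_sumr; apply: eq_bigr => t _.
by rewrite -mulnb natrM mulrA.
Qed.

Lemma exchange_big2 (V : nmodType) (S T U W : finType)
    (F : S -> T -> U -> W -> V) :
  \sum_(s : S) \sum_(t : T) \sum_(u : U) \sum_(w : W) F s t u w =
  \sum_(u : U) \sum_(w : W) \sum_(s : S) \sum_(t : T) F s t u w.
Proof.
under eq_bigr => s _ do rewrite exchange_big.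
rewrite exchange_big; apply: eq_bigr => u _.
by under eq_bigr => s _ do rewrite exchange_big; rewrite exchange_big.
Qed.

Section ArrayState.
Variables (R : realType) (N : nat).
Notation C := R[i].
Notation I := 'I_N.

Definition orthonormal2 (Psi : array2 R N) : Prop :=
  forall i j i' j', inner2 (Psi i j) (Psi i' j') = ((i == i') && (j == j'))%:R.

Definition completeness2 (Psi : array2 R N) : Prop :=
  forall x x' y y', \sum_(i : I) \sum_(j : I) Psi i j x y * (Psi i j x' y')^*
                    = ((x == x') && (y == y'))%:R.

Lemma inner2_lincomb (u v : vec2 R N) (c : I -> I -> C) (Psi : array2 R N) :
  (forall x y, v x y = \sum_(i : I) \sum_(j : I) c i j * Psi i j x y) ->
  inner2 u v = \sum_(i : I) \sum_(j : I) c i j * inner2 u (Psi i j).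
Proof.
move=> vE; rewrite /inner2.
under eq_bigr => x _ do under eq_bigr => y _ do rewrite vE mulr_sumr.
under eq_bigr => x _ do under eq_bigr => y _ do
  under eq_bigr => i _ do rewrite mulr_sumr.
rewrite exchange_big2; apply: eq_bigr => i _; apply: eq_bigr => j _.
rewrite mulr_sumr; apply: eq_bigr => x _; rewrite mulr_sumr.
by apply: eq_bigr => y _; rewrite mulrCA.
Qed.

Lemma orthonormal2_coord (Psi : array2 R N) (v : vec2 R N) (c : I -> I -> C) :
  orthonormal2 Psi ->
  (forall x y, v x y = \sum_(i : I) \sum_(j : I) c i j * Psi i j x y) ->
  forall i j, inner2 (Psi i j) v = c i j.
Proof.
move=> orthoPsi vE i j; rewrite (inner2_lincomb _ vE) -[RHS](sum_delta2 i j c).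
by apply: eq_bigr => i' _; apply: eq_bigr => j' _; rewrite orthoPsi mulrC.
Qed.

Lemma onb2_completeness (Psi : array2 R N) : is_onb2 Psi -> completeness2 Psi.
Proof.
move=> [orthoPsi spanPsi] x x' y y'.
pose e (a b : I) : C := ((a == x') && (b == y'))%:R.
have [c eE] := spanPsi e.
have cE i j : c i j = (Psi i j x' y')^*.
  rewrite -(orthonormal2_coord orthoPsi eE) /inner2.
  rewrite -[RHS](sum_delta2 x' y' (fun a b => (Psi i j a b)^*)).
  apply: eq_bigr => a _; apply: eq_bigr => b _.
  by rewrite /e mulrC (eq_sym a) (eq_sym b).
rewrite -/(e x y) eE.
by apply: eq_bigr => i _; apply: eq_bigr => j _; rewrite cE mulrC.
Qed.

Lemma completeness2_span (Psi : array2 R N) : completeness2 Psi ->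
  forall v : vec2 R N, exists c : I -> I -> C,
    forall x y, v x y = \sum_(i : I) \sum_(j : I) c i j * Psi i j x y.
Proof.
move=> complPsi v; exists (fun i j => inner2 (Psi i j) v) => x y.
rewrite -[LHS](sum_delta2 x y v) /inner2.
under [RHS]eq_bigr => i _ do under eq_bigr => j _ do rewrite mulr_suml.
under [RHS]eq_bigr => i _ do under eq_bigr => j _ do
  under eq_bigr => a _ do rewrite mulr_suml.
rewrite exchange_big2; apply: eq_bigr => a _; apply: eq_bigr => b _.
rewrite -complPsi mulr_suml; apply: eq_bigr => i _; rewrite mulr_suml.
by apply: eq_bigr => j _; rewrite [RHS]mulrC mulrA.
Qed.

Lemma is_onb2E (Psi : array2 R N) :
  is_onb2 Psi <-> orthonormal2 Psi /\ completeness2 Psi.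
Proof.
split=> [onbPsi | [orthoPsi complPsi]].
  by split; [case: onbPsi | exact: onb2_completeness].
by split; [exact: orthoPsi | exact: completeness2_span].
Qed.

Lemma state_of_arrayE (Psi : array2 R N) :
  state_of_array Psi = (fun a b c d => N%:R^-1 * Psi a b c d).
Proof.
do 4!apply: functional_extensionality_dep => ?.
by rewrite /state_of_array sum_delta2.
Qed.

Lemma array_of_stateE (psi : state4 R N) :
  array_of_state psi = (fun i j c d => N%:R * psi i j c d).
Proof.
apply: functional_extensionality_dep => i; apply: functional_extensionality_dep => j.
apply: functional_extensionality_dep => c; apply: functional_extensionality_dep => d.
rewrite /array_of_state -(sum_delta2 i j (fun a b => psi a b c d)).
congr (_ * _); apply: eq_bigr => a _; apply: eq_bigr => b _.
by rewrite (eq_sym a) (eq_sym b).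
Qed.

Lemma rho12_scale (s : C) (f : state4 R N) x y x' y' :
  rho12 (fun a b c d => s * f a b c d) x y x' y' = s * s^* * rho12 f x y x' y'.
Proof.
rewrite /rho12 mulr_sumr; apply: eq_bigr => k _; rewrite mulr_sumr.
by apply: eq_bigr => l _; rewrite rmorphM mulrACA.
Qed.

Lemma rho12_inner2 (Psi : array2 R N) x y x' y' :
  rho12 Psi x y x' y' = inner2 (Psi x' y') (Psi x y).
Proof. by apply: eq_bigr => k _; apply: eq_bigr => l _; rewrite mulrC. Qed.

Hypothesis N_gt0 : (0 < N)%N.

Lemma max_mixed_scaleV (f : state4 R N) :
  is_max_mixed (rho12 (fun a b c d => N%:R^-1 * f a b c d)) <->
  (forall x x' y y', rho12 f x y x' y' = ((x == x') && (y == y'))%:R).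
Proof.
have N2_neq0 : (N ^ 2)%:R != 0 :> C by rewrite pnatr_eq0 -lt0n expn_gt0 N_gt0.
have sE : N%:R^-1 * (N%:R^-1)^* = (N ^ 2)%:R^-1 :> C.
  by rewrite fmorphV /= conjC_nat -invfM natrX expr2.
rewrite /is_max_mixed /max_mixed2; split=> H.
  move=> x x' y y'; apply: (mulIf (invr_neq0 N2_neq0)).
  by rewrite -H rho12_scale sE mulrC.
by move=> x y x' y'; rewrite rho12_scale sE H mulrC.
Qed.

Lemma AME4_scaleV_OQLS (Psi : array2 R N) :
  AME4 (fun a b c d => N%:R^-1 * Psi a b c d) <-> OQLS Psi.
Proof.
have AB : is_max_mixed (rho_AB (fun a b c d => N%:R^-1 * Psi a b c d))
          <-> orthonormal2 Psi.
  rewrite /rho_AB max_mixed_scaleV; split=> H.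
    by move=> i j i' j'; rewrite -rho12_inner2 H (eq_sym i) (eq_sym j).
  by move=> x x' y y'; rewrite rho12_inner2 H (eq_sym x) (eq_sym y).
have AC := max_mixed_scaleV (fun x y k l => Psi x k y l).
have AD := max_mixed_scaleV (fun x y k l => Psi x k l y).
have BC := max_mixed_scaleV (fun x y k l => Psi k x y l).
have BD := max_mixed_scaleV (fun x y k l => Psi k x l y).
have CD := max_mixed_scaleV (fun x y k l => Psi k l x y).
split=> [[/AB orthoPsi [/AC hAC [/AD hAD [/BC hBC [/BD hBD /CD complPsi]]]]] |
         [/is_onb2E[/AB hAB complPsi] [hAD hAC] [hBD hBC]]].
- split; [apply/is_onb2E; split | split | split];
    [exact orthoPsi | exact complPsi | exact hAD | exact hAC | exact hBD | exact hBC].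
- repeat split; [exact hAB | exact (proj2 AC hAC) | exact (proj2 AD hAD)
    | exact (proj2 BC hBC) | exact (proj2 BD hBD) | exact (proj2 CD complPsi)].
Qed.

End ArrayState.

Theorem mainTheorem12 (R : realType) (N : nat) (HN : (2 <= N)%N) :
  (forall Psi : array2 R N, OQLS Psi -> AME4 (state_of_array Psi))
  /\
  (forall psi : state4 R N, AME4 psi ->
     OQLS (array_of_state psi) /\ psi = state_of_array (array_of_state psi)).
Proof.
have N_gt0 : (0 < N)%N by apply: leq_trans HN.
split=> [Psi oqlsPsi | psi amePsi].
  by rewrite state_of_arrayE; apply/(AME4_scaleV_OQLS N_gt0).
have psiE : psi = state_of_array (array_of_state psi).
  rewrite state_of_arrayE array_of_stateE.
  do 4!apply: functional_extensionality_dep => ?.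
  by rewrite mulKf // pnatr_eq0 -lt0n.
split=> //; rewrite psiE state_of_arrayE in amePsi.
exact/(AME4_scaleV_OQLS N_gt0).
Qed.
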